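(* Let $T$ be a causal theory with explainable symbols $\mathbf{p}$ all of whose rules are D-rules. Then $T^\dagger(\mathbf{u})$ is logically equivalent to $H(\mathbf{u},\widehat{\mathbf{u}})_{\Sigma 1}$.
   Context: A causal theory $T$ consists of a list $\mathbf{p}$ of distinct predicate constants (explainable symbols, not equality) and a finite set of causal rules $F\Leftarrow G$. A D-rule has the form $\bigvee_{A\in Pos}A\lor\bigvee_{A\in Neg}\neg A\Leftarrow G$, with $Pos,Neg$ finite sets of atomic formulas whose predicate symbols belong to $\mathbf{p}$ and $G$ a first-order formula without $\to$. For each $p\in\mathbf{p}$, $u_p$ and $\widehat u_p$ are predicate variables of the arity of $p$; $\mathbf{u}$, $\widehat{\mathbf{u}}$ are their lists; for $A=p(\mathbf{t})$, $u(A)=u_p(\mathbf{t})$ and $\widehat u(A)=\widehat u_p(\mathbf{t})$. $T^\dagger(\mathbf{u})$ is the conjunction over rules $F\Leftarrow G$ of $\forall\mathbf{x}(G\to F^{\mathbf{p}}_{\mathbf{u}})$, with $\mathbf{x}$ the free variables of $F,G$ and $F^{\mathbf{p}}_{\mathbf{u}}$ the result of replacing each $p$ by $u_p$. $H(\mathbf{u},\widehat{\mathbf{u}})$ is the conjunction over all rules of $T$ of $\forall\mathbf{x}\Big(G\to\bigvee_{A\in Pos}\big((\widehat u(A)\lor A)\to u(A)\big)\lor\bigvee_{A\in Neg}\big((u(A)\lor\neg A)\to\widehat u(A)\big)\Big)$, $\mathbf{x}$ the free object variables. For a formula $F$, $F_{\Sigma 1}$ is obtained by simultaneously substituting, for each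 $p\in\mathbf{p}$, $\lambda\mathbf{x}(u_p(\mathbf{x})\land p(\mathbf{x}))$ for $u_p$ and $\lambda\mathbf{x}(\neg u_p(\mathbf{x})\land\neg p(\mathbf{x}))$ for $\widehat u_p$. *)

From mathcomp Require Import ssreflect ssrfun ssrbool eqtype ssrnat fintype.
From Stdlib Require Import List.

Set Implicit Arguments.
Unset Strict Implicit.
Unset Printing Implicit Defensive.

Section CausalSemantics.

(* D : the universe of a structure;  P : the explainable predicate constants
   (the list p, distinct by construction);  ar : their arities. *)
Variables (D : Type) (P : Type) (ar : P -> nat).

Definition env := nat -> D.

Definition term := env -> D.

(* interpretation of a list of predicates of the arities of p
   (used for p itself, for u and for u-hat) *)
Definition interp := forall q : P, ('I_(ar q) -> D) -> Prop.

(* atomic formula q(t_1,...,t_n) with q in p *)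
Definition atom := { q : P & 'I_(ar q) -> term }.

Definition eval_atom (I : interp) (A : atom) (e : env) : Prop :=
  I (projT1 A) (fun k => projT2 A k e).

(* D-rule  \/_{A in Pos} A \/ \/_{A in Neg} ~A  <=  G.
   The body G is a first-order formula of the signature (it does not contain
   u or u-hat); it is represented by its truth value under each assignment
   in the structure under consideration. *)
Record drule := DRule {
  Pos : list atom;
  Neg : list atom;
  body : env -> Prop
}.

Definition Tdagger (T : list drule) (u : interp) : Prop :=
  forall r, In r T -> forall e : env, body r e ->
    (exists A, In A (Pos r) /\ eval_atom u A e) \/
    (exists A, In A (Neg r) /\ ~ eval_atom u A e).

Definition Hform (T : list drule) (pI u uh : interp) : Prop :=
  forall r, In r T -> forall e : env, body r e ->
    (exists A, In A (Pos r) /\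
       ((eval_atom uh A e \/ eval_atom pI A e) -> eval_atom u A e)) \/
    (exists A, In A (Neg r) /\
       ((eval_atom u A e \/ ~ eval_atom pI A e) -> eval_atom uh A e)).

(* H(u, u-hat)_{Sigma 1}: the substitution of lambda x (u_p(x) /\ p(x)) for u_p
   and lambda x (~u_p(x) /\ ~p(x)) for u-hat_p; semantically, evaluating H
   with these predicates as values of u and u-hat. *)
Definition Hsigma1 (T : list drule) (pI u : interp) : Prop :=
  Hform T pI (fun q x => u q x /\ pI q x) (fun q x => ~ u q x /\ ~ pI q x).

End CausalSemantics.

From mathcomp Require Import ssreflect.
From Stdlib Require Import Classical Setoid.

(* Under the substitution [u := u /\ p], [u-hat := ~u /\ ~p], the disjunct of
   [H] contributed by a positive literal collapses to [u(A)] and the one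
   contributed by a negative literal to [~u(A)]; the disjuncts of [H] then
   coincide with those of [T^dagger]. *)

Lemma sigma1_pos_literal (U p : Prop) : ((~ U /\ ~ p) \/ p -> U /\ p) <-> U.
Proof.
split=> [HU | hU [[nU _] | hp]] //.
case: (classic U) => // nU.
have [hU _] : U /\ p by apply: HU; case: (classic p); [right | left].
exact: hU.
Qed.

Lemma sigma1_neg_literal (U p : Prop) : ((U /\ p) \/ ~ p -> ~ U /\ ~ p) <-> ~ U.
Proof.
split=> [HU hU | nU [[hU _] | np]] //.
have [nU _] : ~ U /\ ~ p by apply: HU; case: (classic p); [left | right].
exact: nU hU.
Qed.

Theorem lemma4 (D : Type) (P : Type) (ar : P -> nat)
  (pI u : interp D ar) (T : list (drule D ar)) :
  Tdagger T u <-> Hsigma1 T pI u.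
Proof.
rewrite /Hsigma1 /Hform /Tdagger /eval_atom /=.
setoid_rewrite sigma1_pos_literal.
by setoid_rewrite sigma1_neg_literal.
Qed.
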